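(* Let $A$ be a finite alphabet, $\gamma\in(0,1]$, and let $q_\gamma$ be the map associated with the shuffle Hopf algebra $\mathcal H^A_{\sqcup\!\sqcup}$ with its basis of words. There exists a constant $C_\gamma\ge1$ depending only on $\gamma$ such that for every nonempty word $w\in A^*$, $$|q_\gamma(w)|\le\frac{C_\gamma^{|w|-1}}{(|w|!)^{\gamma}}.$$
   Context: $\mathcal H^A_{\sqcup\!\sqcup}$ is the vector space with basis the set $A^*$ of words on $A$ (including the empty word $\mathbf 1$), graded by word length $|w|$, with shuffle product ($\mathbf 1\sqcup\!\sqcup w=w\sqcup\!\sqcup\mathbf 1=w$, $(av)\sqcup\!\sqcup(bw)=a(v\sqcup\!\sqcup bw)+b(av\sqcup\!\sqcup w)$ for letters $a,b$) and deconcatenation coproduct $\Delta(w)=\sum_{uv=w}u\otimes v$. Its inverse-factorial character is $q(w)=1/|w|!$. Let $N=\lfloor1/\gamma\rfloor$. The linear map $q_\gamma$ is defined on words by $q_\gamma(w)=q(w)=1/|w|!$ if $|w|\le N$ and recursively $q_\gamma(w)=\frac{1}{2^{\gamma|w|}-2}\sum_{uv=w,\ u,v\ne\mathbf 1}q_\gamma(u)q_\gamma(v)$ if $|w|\ge N+1$. *)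

From Stdlib Require Import Reals Lra Lia List Arith FinFun.
Import ListNotations.
Open Scope R_scope.

(* N = floor(1/gamma); Int_part r = up r - 1 is the floor of r. *)
Definition Ngam (gamma : R) : nat := Z.to_nat (Int_part (/ gamma)).

Definition sumR (l : list R) : R := fold_right Rplus 0 l.

Definition qchar {A : Type} (w : list A) : R := / INR (fact (length w)).

(* q_gamma computed with fuel (fuel > |w| suffices, since the recursion
   only calls q_gamma on proper nonempty prefixes/suffixes u, v with uv = w).
   The sum over deconcatenations uv = w with u, v <> 1 is the sum over
   k = 1 .. |w|-1 of (firstn k w, skipn k w). *)
Fixpoint qgam_fuel {A : Type} (gamma : R) (fuel : nat) (w : list A) : R :=
  match fuel with
  | O => 0
  | S f =>
      if Nat.leb (length w) (Ngam gamma) then qchar w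
      else / (Rpower 2 (gamma * INR (length w)) - 2) *
           sumR (map (fun k => qgam_fuel gamma f (firstn k w) *
                               qgam_fuel gamma f (skipn k w))
                     (seq 1 (length w - 1)))
  end.

Definition qgam {A : Type} (gamma : R) (w : list A) : R :=
  qgam_fuel gamma (S (length w)) w.

From Stdlib Require Import Reals Arith List FinFun Lra Lia ZArith.
Open Scope R_scope.

(* With W(n) = n^(-2(1-gamma)) (n!)^(-gamma), one shows |q_gamma(w)| <= C^(n-1) W(n) for
   n = |w| by induction.  In the recursive case the product of the bounds for a split k + (n-k)
   equals C^(n-2) W(n) 2^(gamma n) x_k^gamma y_k^(1-gamma), with x_k = binom(n,k)/2^n and
   y_k = (n/(k(n-k)))^2; by weighted AM-GM, sum_k x_k <= 1 and sum_k y_k <= 8 the convolution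
   is at most 8 C^(n-2) W(n) P, where P = 2^(gamma n) >= X = 2^(gamma (N+1)) > 2.  Dividing by
   P - 2 leaves the factor 8 P/(P - 2) <= 8 X/(X - 2) =: C.  The factor n^(-2(1-gamma)) in W
   is what makes the y_k summable. *)

Lemma exp_convex (t a b : R) : 0 <= t <= 1 ->
  exp (t * a + (1 - t) * b) <= t * exp a + (1 - t) * exp b.
Proof.
  intros Ht. set (m := t * a + (1 - t) * b).
  assert (Htangent : forall c, exp m * (1 + (c - m)) <= exp c).
  { intros c. replace (exp c) with (exp m * exp (c - m))
      by (rewrite <- exp_plus; f_equal; ring).
    apply Rmult_le_compat_l; [apply Rlt_le, exp_pos | apply exp_ineq1_le]. }
  pose proof (Htangent a); pose proof (Htangent b).
  assert (exp m = t * (exp m * (1 + (a - m))) + (1 - t) * (exp m * (1 + (b - m))))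
    by (unfold m; ring).
  nra.
Qed.

Lemma weighted_am_gm (t x y : R) : 0 <= t <= 1 -> 0 < x -> 0 < y ->
  exp (t * ln x + (1 - t) * ln y) <= t * x + (1 - t) * y.
Proof.
  intros Ht Hx Hy. rewrite <- (exp_ln x) at 2 by exact Hx.
  rewrite <- (exp_ln y) at 2 by exact Hy. exact (exp_convex t _ _ Ht).
Qed.

Lemma exp_le_compat (x y : R) : x <= y -> exp x <= exp y.
Proof. intros [Hxy | <-]; [left; now apply exp_increasing | lra]. Qed.

Lemma ln_nonneg (x : R) : 1 <= x -> 0 <= ln x.
Proof.
  intros [Hx | <-]; [| rewrite ln_1; lra].
  rewrite <- ln_1. left. apply ln_increasing; lra.
Qed.

Lemma sumR_app (l1 l2 : list R) : sumR (l1 ++ l2) = sumR l1 + sumR l2.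
Proof. induction l1 as [| a l1 IH]; simpl; [ring | rewrite IH; ring]. Qed.

Lemma sumR_map_le {T : Type} (f g : T -> R) (l : list T) :
  (forall k, In k l -> f k <= g k) -> sumR (map f l) <= sumR (map g l).
Proof.
  induction l as [| a l IH]; simpl; intros H; [lra |].
  pose proof (H a (or_introl eq_refl)).
  pose proof (IH (fun k Hk => H k (or_intror Hk))). lra.
Qed.

Lemma Rabs_sumR_map {T : Type} (f : T -> R) (l : list T) :
  Rabs (sumR (map f l)) <= sumR (map (fun k => Rabs (f k)) l).
Proof.
  induction l as [| a l IH]; simpl; [rewrite Rabs_R0; lra |].
  eapply Rle_trans; [apply Rabs_triang | lra].
Qed.

Lemma sumR_map_scal {T : Type} (c : R) (f : T -> R) (l : list T) :
  sumR (map (fun k => c * f k) l) = c * sumR (map f l).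
Proof. induction l as [| a l IH]; simpl; [ring | rewrite IH; ring]. Qed.

Lemma sumR_map_plus {T : Type} (f g : T -> R) (l : list T) :
  sumR (map (fun k => f k + g k) l) = sumR (map f l) + sumR (map g l).
Proof. induction l as [| a l IH]; simpl; [ring | rewrite IH; ring]. Qed.

Lemma sumR_map_seq_telescope (f g : nat -> R) (s m : nat) :
  (forall k, (s <= k < s + m)%nat -> f k <= g k - g (S k)) ->
  sumR (map f (seq s m)) <= g s - g (s + m)%nat.
Proof.
  revert s. induction m as [| m IH]; intros s H; simpl.
  - rewrite Nat.add_0_r. lra.
  - pose proof (H s ltac:(lia)).
    pose proof (IH (S s) (fun k Hk => H k ltac:(lia))).
    replace (s + S m)%nat with (S s + m)%nat by lia. unfold sumR in *. lra.
Qed.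

Lemma sumR_map_seq0 (f : nat -> R) (n : nat) :
  sumR (map f (seq 0 (S n))) = sum_f_R0 f n.
Proof.
  induction n as [| n IH]; [simpl; ring |].
  rewrite seq_S, map_app, sumR_app, IH. simpl. ring.
Qed.

Lemma inv_sq_le_telescope (x : R) : 1 <= x -> / x ^ 2 <= 2 / x - 2 / (x + 1).
Proof.
  intros Hx.
  assert (E : 2 / x - 2 / (x + 1) - / x ^ 2 = (x - 1) / (x ^ 2 * (x + 1)))
    by (field; lra).
  assert (0 <= (x - 1) / (x ^ 2 * (x + 1))).
  { apply Rmult_le_pos; [lra | apply Rlt_le, Rinv_0_lt_compat; nra]. }
  lra.
Qed.

Lemma sum_inv_sq_le (m : nat) :
  sumR (map (fun k => / INR k ^ 2) (seq 1 m)) <= 2.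
Proof.
  eapply Rle_trans.
  { apply (sumR_map_seq_telescope _ (fun k => 2 / INR k)).
    intros k Hk. rewrite S_INR.
    apply inv_sq_le_telescope, (le_INR 1); lia. }
  assert (0 < INR (1 + m)) by (apply lt_0_INR; lia).
  assert (0 <= 2 / INR (1 + m)) by (apply Rlt_le, Rdiv_lt_0_compat; lra).
  simpl INR at 1. lra.
Qed.

Lemma sum_inv_sq_reflect_le (n : nat) :
  sumR (map (fun k => / INR (n - k) ^ 2) (seq 1 (n - 1))) <= 2.
Proof.
  destruct n as [| n]; [simpl; lra |].
  eapply Rle_trans.
  { apply (sumR_map_seq_telescope _ (fun k => - (2 / INR (S (S n - k))))).
    intros k Hk.
    replace (S (S n - S k)) with (S n - k)%nat by lia.
    rewrite (S_INR (S n - k)).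
    pose proof (inv_sq_le_telescope (INR (S n - k)) ltac:(apply (le_INR 1); lia)). lra. }
  replace (S (S n - (1 + (S n - 1)))) with 1%nat by lia.
  assert (0 < INR (S (S n - 1))) by (apply lt_0_INR; lia).
  assert (0 <= 2 / INR (S (S n - 1))) by (apply Rlt_le, Rdiv_lt_0_compat; lra).
  simpl INR at 2. lra.
Qed.

Lemma sum_sq_ratio_le (n : nat) :
  sumR (map (fun k => (INR n / (INR k * INR (n - k))) ^ 2) (seq 1 (n - 1))) <= 8.
Proof.
  eapply Rle_trans.
  { apply (sumR_map_le _ (fun k => 2 * (/ INR k ^ 2 + / INR (n - k) ^ 2))).
    intros k Hk. apply in_seq in Hk.
    assert (Hsplit : INR n = INR k + INR (n - k)) by (rewrite <- plus_INR; f_equal; lia).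
    assert (0 < INR k) by (apply lt_0_INR; lia).
    assert (0 < INR (n - k)) by (apply lt_0_INR; lia).
    rewrite Hsplit. set (a := INR k) in *. set (b := INR (n - k)) in *.
    (* (a + b) / (a b) = 1/a + 1/b, and (u + v)^2 <= 2 (u^2 + v^2) *)
    replace ((a + b) / (a * b)) with (/ a + / b) by (field; lra).
    replace (/ a ^ 2) with ((/ a) ^ 2) by (field; lra).
    replace (/ b ^ 2) with ((/ b) ^ 2) by (field; lra).
    pose proof (pow2_ge_0 (/ a - / b)). nra. }
  rewrite sumR_map_scal, sumR_map_plus.
  pose proof (sum_inv_sq_le (n - 1)). pose proof (sum_inv_sq_reflect_le n). lra.
Qed.

Lemma sum_binomial_le (n : nat) :
  sumR (map (fun k => C n k / 2 ^ n) (seq 1 (n - 1))) <= 1.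
Proof.
  destruct n as [| n]; [simpl; lra |].
  assert (HC : forall k, 0 <= C (S n) k).
  { intros k. unfold C. apply Rlt_le, Rdiv_lt_0_compat;
      [| apply Rmult_lt_0_compat]; apply INR_fact_lt_0. }
  assert (H2n : 2 ^ S n = C (S n) 0 + sumR (map (C (S n)) (seq 1 n)) + C (S n) (S n)).
  { replace 2 with (1 + 1) by ring. rewrite binomial, <- sumR_map_seq0.
    rewrite (map_ext _ (C (S n))) by (intros k; rewrite !pow1; ring).
    rewrite seq_S, map_app, sumR_app. simpl. ring. }
  rewrite (map_ext _ (fun k => / 2 ^ S n * C (S n) k)) by (intros k; unfold Rdiv; ring).
  rewrite sumR_map_scal. replace (S n - 1)%nat with n by lia.
  pose proof (HC 0%nat); pose proof (HC (S n)).
  assert (0 < 2 ^ S n) by (apply pow_lt; lra).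
  apply (Rmult_le_reg_l (2 ^ S n)); [lra |].
  rewrite <- Rmult_assoc, Rinv_r; lra.
Qed.

Definition log_weight (g : R) (n : nat) : R :=
  g * ln (INR (fact n)) + 2 * (1 - g) * ln (INR n).

Definition qgam_bound (c g : R) (n : nat) : R := c ^ (n - 1) * exp (- log_weight g n).

Lemma C_pos (n k : nat) : 0 < C n k.
Proof.
  unfold C. apply Rdiv_lt_0_compat; [| apply Rmult_lt_0_compat]; apply INR_fact_lt_0.
Qed.

Lemma ln_C (n k : nat) :
  ln (C n k) = ln (INR (fact n)) - ln (INR (fact k)) - ln (INR (fact (n - k))).
Proof.
  pose proof (INR_fact_lt_0 n); pose proof (INR_fact_lt_0 k);
    pose proof (INR_fact_lt_0 (n - k)).
  unfold C, Rdiv. rewrite ln_mult, ln_Rinv, ln_mult; try ring;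
    try apply Rinv_0_lt_compat; try apply Rmult_lt_0_compat; assumption.
Qed.

Lemma log_weight_split (g : R) (n k : nat) : (1 <= k < n)%nat ->
  log_weight g k + log_weight g (n - k) =
  log_weight g n - g * INR n * ln 2 - g * ln (C n k / 2 ^ n)
  - (1 - g) * ln ((INR n / (INR k * INR (n - k))) ^ 2).
Proof.
  intros Hk.
  assert (0 < INR n) by (apply lt_0_INR; lia).
  assert (0 < INR k) by (apply lt_0_INR; lia).
  assert (0 < INR (n - k)) by (apply lt_0_INR; lia).
  pose proof (C_pos n k). assert (0 < 2 ^ n) by (apply pow_lt; lra).
  assert (Hx : ln (C n k * / 2 ^ n) = ln (C n k) - INR n * ln 2).
  { rewrite ln_mult, ln_Rinv, ln_pow; [ring | ..].
    all: try apply Rinv_0_lt_compat; lra. }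
  assert (Hy : ln ((INR n * / (INR k * INR (n - k))) ^ 2)
               = 2 * (ln (INR n) - ln (INR k) - ln (INR (n - k)))).
  { rewrite ln_pow, ln_mult, ln_Rinv, ln_mult; [simpl INR; ring | ..].
    all: repeat (apply Rmult_lt_0_compat || apply Rinv_0_lt_compat); lra. }
  unfold log_weight, Rdiv. rewrite Hx, Hy, ln_C. ring.
Qed.

Lemma qgam_bound_mul (c g : R) (n k : nat) : 0 <= g <= 1 -> 0 <= c -> (1 <= k < n)%nat ->
  qgam_bound c g k * qgam_bound c g (n - k) <=
  c ^ (n - 2) * exp (- log_weight g n) * Rpower 2 (g * INR n) *
  (g * (C n k / 2 ^ n) + (1 - g) * (INR n / (INR k * INR (n - k))) ^ 2).
Proof.
  intros Hg Hc Hk. unfold qgam_bound.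
  pose proof (log_weight_split g n k Hk) as Hsplit.
  set (x := C n k / 2 ^ n) in *. set (y := (INR n / (INR k * INR (n - k))) ^ 2) in *.
  assert (Hx : 0 < x) by (apply Rdiv_lt_0_compat; [apply C_pos | apply pow_lt; lra]).
  assert (Hy : 0 < y).
  { apply pow_lt, Rdiv_lt_0_compat; [| apply Rmult_lt_0_compat]; apply lt_0_INR; lia. }
  assert (Hpow : c ^ (k - 1) * c ^ (n - k - 1) = c ^ (n - 2))
    by (rewrite <- pow_add; f_equal; lia).
  assert (Hexp : exp (- log_weight g k) * exp (- log_weight g (n - k)) =
    exp (- log_weight g n) * Rpower 2 (g * INR n) * exp (g * ln x + (1 - g) * ln y)).
  { unfold Rpower. rewrite <- !exp_plus. f_equal. lra. }
  transitivity ((c ^ (k - 1) * c ^ (n - k - 1)) *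
                (exp (- log_weight g k) * exp (- log_weight g (n - k)))); [right; ring |].
  rewrite Hpow, Hexp, !Rmult_assoc.
  apply Rmult_le_compat_l; [apply pow_le; lra |].
  apply Rmult_le_compat_l; [apply Rlt_le, exp_pos |].
  apply Rmult_le_compat_l; [apply Rlt_le, exp_pos |].
  now apply weighted_am_gm.
Qed.

Lemma qgam_bound_convolution (c g : R) (n : nat) : 0 <= g <= 1 -> 0 <= c ->
  sumR (map (fun k => qgam_bound c g k * qgam_bound c g (n - k)) (seq 1 (n - 1)))
  <= 8 * (c ^ (n - 2) * exp (- log_weight g n) * Rpower 2 (g * INR n)).
Proof.
  intros Hg Hc.
  eapply Rle_trans.
  { apply sumR_map_le. intros k Hk. apply in_seq in Hk. apply qgam_bound_mul; auto; lia. }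
  rewrite sumR_map_scal, sumR_map_plus, !sumR_map_scal, (Rmult_comm 8).
  pose proof (sum_binomial_le n); pose proof (sum_sq_ratio_le n).
  apply Rmult_le_compat_l; [| nra].
  apply Rmult_le_pos; [apply Rmult_le_pos; [apply pow_le; lra | apply Rlt_le, exp_pos] |].
  apply Rlt_le, exp_pos.
Qed.

Lemma INR_Ngam (g : R) : 0 < g -> INR (Ngam g) = IZR (Int_part (/ g)).
Proof.
  intros Hg. destruct (base_Int_part (/ g)) as [_ Hlow].
  assert (0 < / g) by (apply Rinv_0_lt_compat; lra).
  assert (-1 < Int_part (/ g))%Z by (apply lt_IZR; lra).
  unfold Ngam. rewrite INR_IZR_INZ, Z2Nat.id; [reflexivity | lia].
Qed.

Lemma Ngam_ge1 (g : R) : 0 < g <= 1 -> (1 <= Ngam g)%nat.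
Proof.
  intros Hg. destruct (base_Int_part (/ g)) as [_ Hlow].
  assert (1 <= / g) by (rewrite <- Rinv_1; apply Rinv_le_contravar; lra).
  apply INR_lt. rewrite INR_Ngam by lra. simpl INR. lra.
Qed.

Lemma Ngam_succ_gt (g : R) : 0 < g -> / g < INR (S (Ngam g)).
Proof.
  intros Hg. destruct (base_Int_part (/ g)) as [_ Hlow].
  rewrite S_INR, INR_Ngam by exact Hg. lra.
Qed.

Definition qgam_threshold (g : R) : R := Rpower 2 (g * INR (S (Ngam g))).

Definition qgam_const (g : R) : R := 8 * qgam_threshold g / (qgam_threshold g - 2).

Lemma qgam_threshold_gt2 (g : R) : 0 < g <= 1 -> 2 < qgam_threshold g.
Proof.
  intros Hg. rewrite <- (Rpower_1 2) at 1 by lra.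
  apply Rpower_lt; [lra |].
  pose proof (Ngam_succ_gt g (proj1 Hg)).
  apply (Rmult_lt_compat_l g) in H; [| lra]. rewrite Rinv_r in H; lra.
Qed.

Lemma qgam_threshold_le (g : R) (n : nat) : 0 <= g -> (Ngam g < n)%nat ->
  qgam_threshold g <= Rpower 2 (g * INR n).
Proof.
  intros Hg Hn. apply Rle_Rpower; [lra |].
  apply Rmult_le_compat_l; [exact Hg | apply le_INR; lia].
Qed.

Lemma qgam_const_ge8 (g : R) : 0 < g <= 1 -> 8 <= qgam_const g.
Proof.
  intros Hg. pose proof (qgam_threshold_gt2 g Hg). unfold qgam_const.
  apply (Rmult_le_reg_r (qgam_threshold g - 2)); [lra |].
  unfold Rdiv. rewrite Rmult_assoc, Rinv_l; lra.
Qed.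

Lemma qgam_bound_step (g : R) (n : nat) : 0 < g <= 1 -> (Ngam g < n)%nat ->
  let c := qgam_const g in
  / (Rpower 2 (g * INR n) - 2) *
    (8 * (c ^ (n - 2) * exp (- log_weight g n) * Rpower 2 (g * INR n)))
  <= qgam_bound c g n.
Proof.
  intros Hg Hn c. unfold qgam_bound.
  pose proof (qgam_threshold_gt2 g Hg) as HX.
  pose proof (qgam_threshold_le g n (Rlt_le _ _ (proj1 Hg)) Hn) as HXP.
  pose proof (qgam_const_ge8 g Hg) as Hc. fold c in Hc.
  pose proof (Ngam_ge1 g Hg).
  set (X := qgam_threshold g) in *. set (P := Rpower 2 (g * INR n)) in *.
  set (M := c ^ (n - 2) * exp (- log_weight g n)).
  assert (HM : 0 <= M) by (apply Rmult_le_pos; [apply pow_le; lra | apply Rlt_le, exp_pos]).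
  replace (c ^ (n - 1) * exp (- log_weight g n)) with (c * M)
    by (unfold M; replace (n - 1)%nat with (S (n - 2)) by lia; simpl; ring).
  replace (/ (P - 2) * (8 * (M * P))) with (8 * P / (P - 2) * M) by (field; lra).
  apply Rmult_le_compat_r; [exact HM |].
  (* [8 P / (P - 2)] decreases in [P], and [P >= X] *)
  assert (E : c - 8 * P / (P - 2) = 16 * (P - X) / ((X - 2) * (P - 2)))
    by (unfold c, qgam_const; fold X; field; lra).
  assert (0 <= 16 * (P - X) / ((X - 2) * (P - 2))).
  { apply Rmult_le_pos; [lra | apply Rlt_le, Rinv_0_lt_compat, Rmult_lt_0_compat; lra]. }
  lra.
Qed.

Lemma sq_le_pow4 (n : nat) : (1 <= n)%nat -> INR n ^ 2 <= 4 ^ (n - 1).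
Proof.
  induction n as [| n IH]; intros Hn; [lia |].
  destruct n as [| n]; [simpl; lra |].
  specialize (IH ltac:(lia)).
  replace (S (S n) - 1)%nat with (S (S n - 1)) by lia.
  change (4 ^ S (S n - 1)) with (4 * 4 ^ (S n - 1)). rewrite (S_INR (S n)).
  assert (1 <= INR (S n)) by (apply (le_INR 1); lia). nra.
Qed.

Lemma inv_fact_le_qgam_bound (c g : R) (n : nat) : 0 <= g <= 1 -> 4 <= c -> (1 <= n)%nat ->
  / INR (fact n) <= qgam_bound c g n.
Proof.
  intros Hg Hc Hn. unfold qgam_bound, log_weight.
  set (F := INR (fact n)). assert (HF : 0 < F) by apply INR_fact_lt_0.
  assert (Hn1 : 1 <= INR n) by (apply (le_INR 1); lia).
  pose proof (ln_nonneg _ Hn1).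
  assert (0 <= ln F) by (apply ln_nonneg, (le_INR 1), lt_O_fact).
  assert (Hsq : 0 < INR n ^ 2) by (apply pow_lt; lra).
  assert (Hexp : / (F * INR n ^ 2) <= exp (- (g * ln F + 2 * (1 - g) * ln (INR n)))).
  { rewrite <- (exp_ln (F * INR n ^ 2)), <- exp_Ropp by (apply Rmult_lt_0_compat; lra).
    apply exp_le_compat. rewrite ln_mult, ln_pow by lra. simpl INR. nra. }
  assert (Hpow : INR n ^ 2 <= c ^ (n - 1)).
  { eapply Rle_trans; [apply sq_le_pow4; exact Hn | apply pow_incr; lra]. }
  eapply Rle_trans; [| apply Rmult_le_compat_l; [apply pow_le; lra | exact Hexp]].
  rewrite Rinv_mult.
  replace (c ^ (n - 1) * (/ F * / INR n ^ 2)) with (c ^ (n - 1) / INR n ^ 2 * / F)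
    by (unfold Rdiv; ring).
  rewrite <- (Rmult_1_l (/ F)) at 1.
  apply Rmult_le_compat_r; [apply Rlt_le, Rinv_0_lt_compat; exact HF |].
  apply (Rmult_le_reg_r (INR n ^ 2)); [exact Hsq |].
  unfold Rdiv. rewrite Rmult_assoc, Rinv_l; lra.
Qed.

Lemma qgam_fuel_le_bound (g : R) : 0 < g <= 1 ->
  forall (A : Type) (fuel : nat) (w : list A), w <> nil -> (length w < fuel)%nat ->
  Rabs (qgam_fuel g fuel w) <= qgam_bound (qgam_const g) g (length w).
Proof.
  intros Hg A fuel. induction fuel as [| fuel IH]; intros w Hw Hlen; [lia |].
  pose proof (qgam_const_ge8 g Hg) as Hc.
  assert (Hn : (1 <= length w)%nat) by (destruct w; [congruence | simpl; lia]).
  cbn [qgam_fuel]. destruct (Nat.leb (length w) (Ngam g)) eqn:Hsmall.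
  - unfold qchar. rewrite Rabs_right by (apply Rle_ge, Rlt_le, Rinv_0_lt_compat, INR_fact_lt_0).
    apply inv_fact_le_qgam_bound; [lra | lra | exact Hn].
  - apply Nat.leb_gt in Hsmall. set (n := length w) in *.
    assert (HP : 2 < Rpower 2 (g * INR n)).
    { eapply Rlt_le_trans; [apply qgam_threshold_gt2, Hg | apply qgam_threshold_le; lra || lia]. }
    rewrite Rabs_mult, Rabs_right by (apply Rle_ge, Rlt_le, Rinv_0_lt_compat; lra).
    eapply Rle_trans; [| apply qgam_bound_step; assumption].
    apply Rmult_le_compat_l; [apply Rlt_le, Rinv_0_lt_compat; lra |].
    eapply Rle_trans; [apply Rabs_sumR_map |].
    eapply Rle_trans; [| apply qgam_bound_convolution; lra].
    apply sumR_map_le. intros k Hk. apply in_seq in Hk. rewrite Rabs_mult.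
    assert (Hpre : length (firstn k w) = k) by (rewrite length_firstn; lia).
    assert (Hsuf : length (skipn k w) = (n - k)%nat) by apply length_skipn.
    assert (Hu : firstn k w <> nil) by (intros E; rewrite E in Hpre; simpl in Hpre; lia).
    assert (Hv : skipn k w <> nil) by (intros E; rewrite E in Hsuf; simpl in Hsuf; lia).
    pose proof (IH _ Hu ltac:(lia)) as Hqu. pose proof (IH _ Hv ltac:(lia)) as Hqv.
    rewrite Hpre in Hqu. rewrite Hsuf in Hqv.
    apply Rmult_le_compat; try apply Rabs_pos; assumption.
Qed.

Lemma qgam_bound_le (c g : R) (n : nat) : 0 <= g <= 1 -> 0 <= c -> (1 <= n)%nat ->
  qgam_bound c g n <= c ^ (n - 1) / Rpower (INR (fact n)) g.
Proof.
  intros Hg Hc Hn. unfold qgam_bound, log_weight, Rdiv, Rpower.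
  apply Rmult_le_compat_l; [apply pow_le; exact Hc |].
  rewrite <- exp_Ropp. apply exp_le_compat.
  assert (0 <= ln (INR n)) by (apply ln_nonneg, (le_INR 1); exact Hn).
  nra.
Qed.

Theorem mainTheorem5 :
  forall gamma : R, 0 < gamma <= 1 ->
  exists C : R, 1 <= C /\
    forall (A : Type), Finite A ->
    forall w : list A, w <> nil ->
      Rabs (qgam gamma w) <= C ^ (length w - 1) / Rpower (INR (fact (length w))) gamma.
Proof.
  intros g Hg. exists (qgam_const g).
  pose proof (qgam_const_ge8 g Hg). split; [lra |].
  intros A _ w Hw. unfold qgam.
  eapply Rle_trans; [apply qgam_fuel_le_bound; auto |].
  apply qgam_bound_le; [lra | lra |].
  destruct w; [congruence | simpl; lia].
Qed.
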